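(* Let Assumption 1 hold. For every real $c_1,\dots,c_n$, every initial state $x_0=x(0)\in\mathbb{R}^n$ of the plant and every locally integrable input $u(\cdot)$, the state $\chi(t)=\mathrm{col}(\zeta(t),\mu(t))\in\mathbb{R}^{2n}$ of the filters satisfies, for all $t\ge 0$, \[\dot\chi(t)=A_{\mathrm f}\chi(t)+B_{\mathrm f}u(t)+G_{\mathrm f}\,\mathrm{e}^{A_{\mathrm r}^\top t}x_0 ,\] and the pair $(A_{\mathrm f},B_{\mathrm f})$ is reachable.
   Context: Fix $n\ge 1$ and real numbers $a_1,\dots,a_n,b_1,\dots,b_n$. The plant is the continuous-time SISO system $y^{(n)}+a_1y^{(n-1)}+\dots+a_ny=b_1u^{(n-1)}+\dots+b_nu$, represented in observability canonical form $\dot x=Ax+Bu$, $y=Cx$, $x(t)\in\mathbb{R}^n$, where $C=[0_{1,n-1}\;1]$, $A$ is the $n\times n$ matrix whose first $n-1$ columns are $\begin{bmatrix}0_{1,n-1}\\ I_{n-1}\end{bmatrix}$ and whose last column is $(-a_n,\dots,-a_1)^\top$, and $B=(b_n,\dots,b_1)^\top$. Assumption 1: the polynomials $s^n+a_1s^{n-1}+\dots+a_n$ and $b_1s^{n-1}+\dots+b_n$ are coprime (no common complex root). For real parameters $c_1,\dots,c_n$, $A_{\mathrm r}\in\mathbb{R}^{n\times n}$ is the matrix whose first $n-1$ rows are $[0_{n-1,1}\;I_{n-1}]$ and whose last row is $(-c_n,\dots,-c_1)$, and $B_{\mathrm r}=(0,\dots,0,1)^\top\in\mathbb{R}^n$.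 The filters are $\dot\zeta=A_{\mathrm r}\zeta+B_{\mathrm r}u$, $\zeta(0)=0$, and $\dot\mu=A_{\mathrm r}\mu+B_{\mathrm r}y$, $\mu(0)=0$, with $\chi=\mathrm{col}(\zeta,\mu)$. Define $A_{\mathrm f}=\begin{bmatrix}A_{\mathrm r}&0_{n,n}\\ L_b& A_a\end{bmatrix}\in\mathbb{R}^{2n\times 2n}$, where $L_b\in\mathbb{R}^{n\times n}$ has all rows zero except the last, which equals $(b_n,\dots,b_1)$, and $A_a\in\mathbb{R}^{n\times n}$ has first $n-1$ rows $[0_{n-1,1}\;I_{n-1}]$ and last row $(-a_n,\dots,-a_1)$; $B_{\mathrm f}=\mathrm{col}(0_{n-1,1},1,0_{n,1})\in\mathbb{R}^{2n}$; and $G_{\mathrm f}\in\mathbb{R}^{2n\times n}$ is the matrix whose only nonzero entry is a $1$ in position $(2n,n)$. *)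

From HB Require Import structures.
From mathcomp Require Import all_boot all_order all_algebra.
From mathcomp Require Import all_classical all_reals all_analysis.
Set Implicit Arguments. Unset Strict Implicit. Unset Printing Implicit Defensive.
Import Order.TTheory GRing.Theory Num.Theory.
Import numFieldNormedType.Exports.
Local Open Scope classical_set_scope.
Local Open Scope ring_scope.

Section Defs.
Context {R : realType}.

(* Coefficient vectors: for k : 'I_n, [a k] stands for a_{k+1}.
   rev_ord i (value n-1-i) is used to list (a_n, ..., a_1) top-to-bottom. *)

Definition den_poly n (a : 'I_n -> R) : {poly R} :=
  'X^n + \sum_(k < n) a k *: 'X^(n.-1 - k).
Definition num_poly n (b : 'I_n -> R) : {poly R} :=
  \sum_(k < n) b k *: 'X^(n.-1 - k).

Definition A_obs n (a : 'I_n -> R) : 'M[R]_n :=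
  \matrix_(i, j) if (val j == n.-1)%N then - a (rev_ord i)
                 else ((val i == (val j).+1)%N)%:R.
Definition B_obs n (b : 'I_n -> R) : 'cV[R]_n := \col_i b (rev_ord i).
Definition C_obs n : 'rV[R]_n := \row_j ((val j == n.-1)%N)%:R.

Definition A_comp n (c : 'I_n -> R) : 'M[R]_n :=
  \matrix_(i, j) if (val i == n.-1)%N then - c (rev_ord j)
                 else ((val j == (val i).+1)%N)%:R.
Definition A_r n (c : 'I_n -> R) : 'M[R]_n := A_comp c.
Definition B_r n : 'cV[R]_n := \col_i ((val i == n.-1)%N)%:R.
Definition A_a n (a : 'I_n -> R) : 'M[R]_n := A_comp a.
Definition L_b n (b : 'I_n -> R) : 'M[R]_n :=
  \matrix_(i, j) if (val i == n.-1)%N then b (rev_ord j) else 0.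

Definition A_f n (a b c : 'I_n -> R) : 'M[R]_(n + n) :=
  block_mx (A_r c) 0 (L_b b) (A_a a).
Definition B_f n : 'cV[R]_(n + n) := col_mx (B_r n) 0.
Definition G_f n : 'M[R]_(n + n, n) :=
  \matrix_(i, j) (((val i == (n + n).-1) && (val j == n.-1))%N)%:R.

Definition mexp n (M : 'M[R]_n) (t : R) : 'M[R]_n :=
  \matrix_(i, j) limn (fun N : nat => \sum_(k < N) (t ^+ k / (k`!)%:R) * (M ^+ k) i j).

Definition ode_sol k (z : R -> 'cV[R]_k) (F : R -> 'cV[R]_k) : Prop :=
  forall t, 0 <= t -> forall i : 'I_k,
    (@lebesgue_measure R).-integrable `[0, t] (fun s => (F s i 0)%:E) /\
    z t i 0 = z 0 i 0 + \int[@lebesgue_measure R]_(s in `[0, t]) F s i 0.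

Definition loc_integrable (u : R -> R) : Prop :=
  forall t, 0 <= t -> (@lebesgue_measure R).-integrable `[0, t] (fun s => (u s)%:E).

Definition reach_mx k (A : 'M[R]_k) (B : 'cV[R]_k) : 'M[R]_k :=
  \matrix_(i, j) (A ^+ j *m B) i 0.
Definition reachable k (A : 'M[R]_k) (B : 'cV[R]_k) : Prop :=
  \rank (reach_mx A B) = k.

End Defs.

From HB Require Import structures.
From mathcomp Require Import all_boot all_order all_algebra.
From mathcomp Require Import all_classical all_reals all_analysis.
From mathcomp Require Import ring zify.
Import Order.TTheory GRing.Theory Num.Theory.
Import numFieldNormedType.Exports.
Local Open Scope classical_set_scope.
Local Open Scope ring_scope.
Set Implicit Arguments. Unset Strict Implicit. Unset Printing Implicit Defensive.

(** Let [K_b] and [K_d] be the Bezoutian matrices of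
    [den_poly c] against [num_poly b] and against [den_poly c - den_poly a].
    They intertwine [A_r c] with its transpose and map [B_r] to the coefficient
    columns of these polynomials, so the observation error
    [e = x - K_b zeta - K_d mu] satisfies [e' = (A_r c)^T e], [e 0 = x0].
    Uniqueness for linear ODEs (Picard iteration, compared term by term with
    the exponential series) gives [e t = mexp (A_r c)^T t *m x0], and writing
    the output as [C e + num_b zeta + (den_c - den_a) mu] in the [mu]-equation
    yields the block form, since [G_f e = col (0, B_r C e)].

    Encode a row vector [w = (w1, w2)] by the polynomial
    [w1 den_a + w2 num_b], of degree [< 2n].  Right multiplication by [A_f]
    acts as multiplication by ['X] up to [(w *m B_f) den_c den_a].  If [w] kills
    [A_f ^+ j *m B_f] for [j < 2n], the encoding of [w *m A_f ^+ 2n] is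
    ['X^2n] times that of [w] and still has degree [< 2n], so the encoding
    vanishes; coprimality of [den_a] and [num_b] then forces [w = 0]. *)

Section Polynomials.
Variables (R : nzRingType) (d : nat).

Lemma rVpolyE (u : 'rV[R]_d) : rVpoly u = \sum_(i < d) u 0 i *: 'X^i.
Proof. by rewrite /rVpoly poly_def; apply: eq_bigr => i _; rewrite valK. Qed.

Lemma rVpoly_mulmx k (u : 'rV[R]_k) (M : 'M[R]_(k, d)) :
  rVpoly (u *m M) = \sum_l u 0 l *: rVpoly (row l M).
Proof.
by rewrite mulmx_sum_row linear_sum; apply: eq_bigr => l _; rewrite linearZ.
Qed.

Lemma drop_polyS m (q : {poly R}) :
  drop_poly m q = drop_poly m.+1 q * 'X + (q`_m)%:P.
Proof.
apply/polyP => i; rewrite coefD coefMX coefC !coef_drop_poly.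
by case: i => [|i] /=; rewrite ?add0r ?addr0 // addSnnS.
Qed.

End Polynomials.

Section CanonicalForms.
Variables (R : realType) (n' : nat).
Local Notation n := n'.+1.
Implicit Types a b c : 'I_n -> R.

Lemma B_r_delta : B_r n = delta_mx ord_max 0 :> 'cV[R]_n.
Proof. by apply/matrixP => i j; rewrite !mxE (ord1 j) eqxx andbT. Qed.

Lemma C_obs_delta : C_obs n = delta_mx 0 ord_max :> 'rV[R]_n.
Proof. by apply/matrixP => i j; rewrite !mxE (ord1 i) eqxx. Qed.

Lemma mulmx_B_r m (P : 'M[R]_(m, n)) : P *m B_r n = col ord_max P.
Proof. by rewrite B_r_delta colE. Qed.

Lemma C_obs_mulmx m (P : 'M[R]_(n, m)) : C_obs n *m P = row ord_max P.
Proof. by rewrite C_obs_delta rowE. Qed.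

Lemma rev_sum_Xn (v : 'I_n -> R) :
  \sum_(k < n) v k *: 'X^(n.-1 - k) = rVpoly (\row_j v (rev_ord j)).
Proof.
rewrite rVpolyE (reindex_inj rev_ord_inj) /=; apply: eq_bigr => j _.
by rewrite mxE; congr (_ *: 'X^_); case: j => j /= ?; lia.
Qed.

Lemma coef_num_poly b (i : 'I_n) : (num_poly b)`_i = b (rev_ord i).
Proof. by rewrite /num_poly rev_sum_Xn coef_rVpoly_ord mxE. Qed.

Lemma size_num_poly b : (size (num_poly b) <= n)%N.
Proof. by rewrite /num_poly rev_sum_Xn size_poly. Qed.

Lemma den_polyE c : den_poly c = 'X^n + rVpoly (\row_j c (rev_ord j)).
Proof. by rewrite /den_poly rev_sum_Xn. Qed.

Lemma coef_den_poly c (i : 'I_n) : (den_poly c)`_i = c (rev_ord i).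
Proof.
by rewrite den_polyE coefD coefXn coef_rVpoly_ord mxE ltn_eqF ?add0r.
Qed.

Lemma coef_den_poly_n c : (den_poly c)`_n = 1.
Proof. by rewrite den_polyE coefD coefXn eqxx nth_default ?addr0 ?size_poly. Qed.

Lemma size_den_poly c : size (den_poly c) = n.+1.
Proof. by rewrite den_polyE size_polyDl size_polyXn // ltnS size_poly. Qed.

Lemma size_den_polyB a c : (size (den_poly c - den_poly a)%R <= n)%N.
Proof.
by rewrite !den_polyE opprD addrACA subrr add0r -linearB size_poly.
Qed.

Lemma rVpoly_row_A_comp c (k : 'I_n) :
  rVpoly (row k (A_comp c)) = 'X^(k.+1) - (k == ord_max)%:R *: den_poly c.
Proof.
have [->|kN] := eqVneq k ord_max.
  rewrite scale1r den_polyE opprD addrA subrr add0r -linearN.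
  by congr rVpoly; apply/rowP => j; rewrite !mxE eqxx.
have k1 : (k.+1 < n)%N by move: kN; rewrite -val_eqE /=; case: k => /= k; lia.
rewrite scale0r subr0 -(rVpoly_delta _ (Ordinal k1)); congr rVpoly.
apply/rowP => j; rewrite !mxE eqxx /= (_ : (k == n' :> nat) = false) //.
exact/negbTE.
Qed.

Lemma rVpoly_mulmx_A_comp (u : 'rV[R]_n) c :
  rVpoly (u *m A_comp c) = 'X * rVpoly u - u 0 ord_max *: den_poly c.
Proof.
rewrite rVpoly_mulmx.
under eq_bigr do rewrite rVpoly_row_A_comp scalerBr scalerA mulr_natr.
rewrite sumrB rVpolyE mulr_sumr; congr (_ - _).
  by apply: eq_bigr => k _; rewrite exprS scalerAr.
rewrite (bigD1 ord_max) //= eqxx mulr1n big1 ?addr0 // => k /negbTE->.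
by rewrite mulr0n scale0r.
Qed.

Lemma mulmx_B_r_row (u : 'rV[R]_n) : (u *m B_r n) 0 0 = u 0 ord_max.
Proof. by rewrite mulmx_B_r mxE. Qed.

Lemma L_b_num_poly b : L_b b = B_r n *m poly_rV (num_poly b).
Proof.
apply/matrixP => i j; rewrite !mxE big_ord1 !mxE coef_num_poly.
by case: eqP; rewrite ?mul1r ?mul0r.
Qed.

Lemma rVpoly_mulmx_L_b (u : 'rV[R]_n) b :
  rVpoly (u *m L_b b) = u 0 ord_max *: num_poly b.
Proof.
rewrite L_b_num_poly mulmxA [u *m _]mx11_scalar mul_scalar_mx mulmx_B_r_row.
by rewrite [rVpoly _]linearZ /= poly_rV_K ?size_num_poly.
Qed.

Lemma B_obs_num_poly b : B_obs b = (poly_rV (num_poly b))^T.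
Proof. by apply/matrixP => i j; rewrite !mxE coef_num_poly. Qed.

Lemma A_comp_poly_rV a c :
  A_comp a = A_comp c + B_r n *m poly_rV (den_poly c - den_poly a).
Proof.
apply/matrixP => i j; rewrite !mxE big_ord1 !mxE coefB !coef_den_poly.
by case: eqP => _; rewrite ?mul1r ?mul0r ?addr0 //; ring.
Qed.

Lemma A_obs_poly_rV a c :
  A_obs a = (A_comp c)^T + (poly_rV (den_poly c - den_poly a))^T *m C_obs n.
Proof.
apply/matrixP => i j; rewrite !mxE big_ord1 !mxE coefB !coef_den_poly.
by case: eqP => _; rewrite ?mulr1 ?mulr0 ?addr0 //; ring.
Qed.

Lemma G_f_block : G_f n = col_mx 0 (B_r n *m C_obs n) :> 'M[R]_(n + n, n).
Proof.
apply/matrixP => i j; rewrite !mxE; case: splitP => k /= ->; rewrite !mxE.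
  by case: eqP => //; have := ltn_ord k; lia.
rewrite big_ord1 !mxE (_ : (n + k == n' + n)%N = (k == n' :> nat)); last first.
  by apply/eqP/eqP; lia.
by do 2 case: eqP; rewrite ?mulr1 ?mulr0.
Qed.

End CanonicalForms.

Section Bezoutian.
Variables (R : realType) (n' : nat).
Local Notation n := n'.+1.
Variables (c : 'I_n -> R) (p : {poly R}).
Hypothesis size_p : (size p <= n)%N.
Local Notation G := (den_poly c).

Definition bezout_row m : {poly R} := p * drop_poly m G - G * drop_poly m p.

(* Row [i] of the Bezoutian matrix of [G] and [p] is [bezout_row i.+1], where
   [drop_poly m q] is [q %/ 'X^m]; the recursion [bezout_rowE] is exactly the
   intertwining [bezout_mx *m A_comp c = (A_comp c)^T *m bezout_mx]. *)
Definition bezout_mx : 'M[R]_n := \matrix_(i < n) poly_rV (bezout_row i.+1).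

Lemma bezout_row0 : bezout_row 0 = 0.
Proof. by rewrite /bezout_row !drop_poly0l mulrC subrr. Qed.

Lemma bezout_rowE m : bezout_row m = 'X * bezout_row m.+1 + G`_m *: p - p`_m *: G.
Proof. by rewrite /bezout_row (drop_polyS m G) (drop_polyS m p) -!mul_polyC; ring. Qed.

Lemma bezout_row_take m :
  'X^m * bezout_row m = G * take_poly m p - p * take_poly m G.
Proof.
have tE q : take_poly m q = q - drop_poly m q * 'X^m.
  by rewrite -{2}(poly_take_drop m q) addrK.
by rewrite !tE /bezout_row; ring.
Qed.

Lemma size_bezout_row m : (size (bezout_row m) <= n)%N.
Proof.
have [->|r0] := eqVneq (bezout_row m) 0; first by rewrite size_poly0.
rewrite -(leq_add2l m) -size_mulXn // mulrC bezout_row_take.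
rewrite (leq_trans (size_polyD _ _)) // size_polyN geq_max.
rewrite !(leq_trans (size_polyMleq _ _)) // ?size_den_poly -subn1.
  by rewrite (leq_trans (leq_subr _ _)) // addnC leq_add ?size_take_poly.
by rewrite addSn subn1 /= addnC leq_add2r size_take_poly.
Qed.

Lemma bezout_row_n : bezout_row n = p.
Proof.
rewrite /bezout_row (drop_poly_eq0 size_p) mulr0 subr0 den_polyE drop_polyD.
by rewrite (drop_poly_eq0 (size_poly _ _)) addr0 -['X^n]mul1r drop_polyMXn_id mulr1.
Qed.

Lemma coef_bezout_row (i : 'I_n) : (bezout_row i.+1)`_n' = p`_i.
Proof.
have /(congr1 (fun q : {poly R} => q`_n)) := bezout_rowE i.
rewrite [in LHS]nth_default ?size_bezout_row // coefB coefD coefXM !coefZ.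
rewrite coef_den_poly_n (nth_default _ size_p) mulr0 addr0 mulr1.
by move/eqP; rewrite eq_sym subr_eq0 => /eqP.
Qed.

Lemma row_bezout_mx i : row i bezout_mx = poly_rV (bezout_row i.+1).
Proof. exact: rowK. Qed.

Lemma rVpoly_row_bezout_mx i : rVpoly (row i bezout_mx) = bezout_row i.+1.
Proof. by rewrite row_bezout_mx poly_rV_K ?size_bezout_row. Qed.

Lemma bezout_mx_last i : bezout_mx i ord_max = p`_i.
Proof. by rewrite !mxE coef_bezout_row. Qed.

Lemma bezout_mx_B_r : bezout_mx *m B_r n = (poly_rV p)^T.
Proof.
by apply/matrixP => i j; rewrite (ord1 j) mulmx_B_r !mxE coef_bezout_row.
Qed.

Lemma C_obs_bezout_mx : C_obs n *m bezout_mx = poly_rV p.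
Proof. by rewrite C_obs_mulmx row_bezout_mx bezout_row_n. Qed.

Lemma sum_shift_bezout_row (i : 'I_n) :
  \sum_(l < n') (i == l.+1 :> nat)%:R *: bezout_row l.+1 = bezout_row i.
Proof.
case: i => [[|i] /= lt_i]; first by rewrite bezout_row0 big1 // => l _; rewrite scale0r.
rewrite (bigD1 (Ordinal (lt_i : (i < n')%N))) //= eqxx scale1r big1 ?addr0 //.
by move=> l; rewrite -val_eqE /= eqSS eq_sym => /negbTE->; rewrite scale0r.
Qed.

Lemma bezout_mx_A_comp : bezout_mx *m A_comp c = (A_comp c)^T *m bezout_mx.
Proof.
apply/row_matrixP => i; apply: (can_inj rVpolyK).
rewrite !row_mul rVpoly_mulmx_A_comp rVpoly_mulmx rVpoly_row_bezout_mx.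
under eq_bigr do rewrite rVpoly_row_bezout_mx !mxE.
rewrite big_ord_recr /= eqxx bezout_row_n mxE bezout_mx_last.
rewrite (eq_bigr (fun l : 'I_n' => (i == l.+1 :> nat)%:R *: bezout_row l.+1)).
  by rewrite sum_shift_bezout_row (bezout_rowE i) coef_den_poly scaleNr; ring.
by move=> l _; rewrite ltn_eqF.
Qed.

End Bezoutian.

Lemma reach_mx_coef (R : realType) k (A : 'M[R]_k) (B : 'cV[R]_k)
    (v : 'rV[R]_k) (j : 'I_k) :
  (v *m reach_mx A B) 0 j = (v *m A ^+ j *m B) 0 0.
Proof. by rewrite -mulmxA !mxE; apply: eq_bigr => i _; rewrite mxE. Qed.

Lemma reachable_ker0 (R : realType) k (A : 'M[R]_k) (B : 'cV[R]_k) :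
  (forall v : 'rV[R]_k, (forall j, (j < k)%N -> (v *m A ^+ j *m B) 0 0 = 0) -> v = 0) ->
  reachable A B.
Proof.
move=> vAB0; apply/eqP; rewrite -[_ == _]/(row_free _) -kermx_eq0.
apply/eqP/row_matrixP => i; rewrite row0; apply: vAB0 => j lt_jk.
rewrite -(reach_mx_coef _ _ _ (Ordinal lt_jk)).
by have /sub_kermxP-> := row_sub i (kermx (reach_mx A B)); rewrite mxE.
Qed.


Section Reachability.
Variables (R : realType) (n' : nat).
Local Notation n := n'.+1.
Variables a b c : 'I_n -> R.
Local Notation A := (A_f a b c).
Local Notation B := (B_f n).

Definition reach_poly (w : 'rV[R]_(n + n)) : {poly R} :=
  rVpoly (lsubmx w) * den_poly a + rVpoly (rsubmx w) * num_poly b.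

Lemma reach_poly_mulmx_A_f w :
  reach_poly (w *m A) = 'X * reach_poly w - (w *m B) 0 0 *: (den_poly c * den_poly a).
Proof.
rewrite -(hsubmxK w) /A_f /B_f mul_row_block mul_row_col /reach_poly.
rewrite !row_mxKl !row_mxKr !mulmx0 add0r addr0 linearD /= mulmx_B_r_row.
by rewrite /A_r /A_a !rVpoly_mulmx_A_comp rVpoly_mulmx_L_b -!mul_polyC; ring.
Qed.

Lemma reach_poly_mulmx_A_f_exp w j :
  (forall i, (i < j)%N -> (w *m A ^+ i *m B) 0 0 = 0) ->
  reach_poly (w *m A ^+ j) = 'X^j * reach_poly w.
Proof.
elim: j => [|j IHj] wB0; first by rewrite expr0 mulmx1 mul1r.
rewrite exprSr mulmxA reach_poly_mulmx_A_f IHj => [|i lt_ij]; last first.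
  by rewrite wB0 // ltnW.
by rewrite wB0 // scale0r subr0 exprS mulrA.
Qed.

Lemma size_reach_poly w : (size (reach_poly w) <= n + n)%N.
Proof.
rewrite (leq_trans (size_polyD _ _)) // geq_max.
rewrite !(leq_trans (size_polyMleq _ _)) // ?size_den_poly -subn1.
  by rewrite (leq_trans (leq_subr _ _)) // leq_add ?size_poly ?size_num_poly.
by rewrite addnS subn1 /= leq_add2r size_poly.
Qed.

Lemma reach_poly_eq0 w :
  (forall i, (i < n + n)%N -> (w *m A ^+ i *m B) 0 0 = 0) -> reach_poly w = 0.
Proof.
move=> wB0; apply/eqP; apply: contraTT (size_reach_poly (w *m A ^+ (n + n))).
move=> P0; rewrite reach_poly_mulmx_A_f_exp // mulrC size_mulXn // -ltnNge.
by rewrite -[X in (X < _)%N]addn0 ltn_add2l lt0n size_poly_eq0.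
Qed.

Lemma reach_poly_inj w :
  coprimep (den_poly a) (num_poly b) -> reach_poly w = 0 -> w = 0.
Proof.
move=> cop; rewrite /reach_poly.
set p1 := rVpoly (lsubmx w); set p2 := rVpoly (rsubmx w) => P0.
have Da0 : den_poly a != 0 by rewrite -size_poly_eq0 size_den_poly.
have p2_0 : p2 = 0.
  apply/eqP; apply: contraT => p2N0.
  have : den_poly a %| p2.
    rewrite -(Gauss_dvdpl _ cop) (_ : p2 * _ = - p1 * den_poly a) ?dvdp_mull //.
    by apply/eqP; rewrite mulNr -addr_eq0 addrC P0.
  move=> /(dvdp_leq p2N0); rewrite size_den_poly ltnNge.
  by rewrite (leq_trans (size_poly _ _)).
have p1_0 : p1 = 0.
  apply/eqP; move: P0; rewrite p2_0 mul0r addr0 => /eqP.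
  by rewrite mulf_eq0 (negbTE Da0) orbF.
have rV0 (u : 'rV[R]_n) : rVpoly u = 0 -> u = 0.
  by move=> u0; apply: (can_inj rVpolyK); rewrite u0 linear0.
by rewrite -(hsubmxK w) (rV0 _ p1_0) (rV0 _ p2_0) row_mx0.
Qed.

End Reachability.

Lemma reachable_A_f (R : realType) n' (a b c : 'I_n'.+1 -> R) :
  coprimep (den_poly a) (num_poly b) -> reachable (A_f a b c) (B_f n'.+1).
Proof.
by move=> cop; apply: reachable_ker0 => w /reach_poly_eq0; apply: reach_poly_inj.
Qed.

Section ObserverError.
Variables (R : realType) (n' : nat).
Local Notation n := n'.+1.
Variables a b c : 'I_n -> R.
Local Notation Kb := (bezout_mx c (num_poly b)).
Local Notation Kd := (bezout_mx c (den_poly c - den_poly a)).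

Definition observer_error (x zeta mu : 'cV[R]_n) : 'cV[R]_n :=
  x - Kb *m zeta - Kd *m mu.

Lemma scale_output (y : 'cV[R]_n) (x : 'cV[R]_n) :
  (C_obs n *m x) 0 0 *: y = y *m (C_obs n *m x).
Proof. by rewrite {2}[C_obs n *m x]mx11_scalar mul_mx_scalar. Qed.

Lemma observer_error_rhs (x zeta mu : 'cV[R]_n) (v : R) :
  (A_obs a *m x + v *: B_obs b) - Kb *m (A_r c *m zeta + v *: B_r n)
    - Kd *m (A_r c *m mu + (C_obs n *m x) 0 0 *: B_r n)
  = (A_r c)^T *m observer_error x zeta mu.
Proof.
have cancel (V : zmodType) (p q r s t : V) : p + s + t - (q + t) - (r + s) = p - q - r.
  rewrite !opprD !addrA [p + s + t - q]addrAC addrK.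
  by rewrite [p + s - q]addrAC [_ - r]addrAC addrK.
rewrite /observer_error !mulmxDr !mulmxN !mulmxA -!scalemxAr /A_r !bezout_mx_A_comp
  ?size_num_poly ?size_den_polyB // bezout_mx_B_r ?size_num_poly //.
rewrite bezout_mx_B_r ?size_den_polyB // (A_obs_poly_rV a c) B_obs_num_poly.
by rewrite mulmxDl -!mulmxA -scale_output cancel.
Qed.

Lemma mu_rhs (x zeta mu : 'cV[R]_n) :
  A_r c *m mu + (C_obs n *m x) 0 0 *: B_r n =
  L_b b *m zeta + A_a a *m mu + (B_r n *m C_obs n) *m observer_error x zeta mu.
Proof.
have cancel (V : zmodType) (p y m d : V) : p + y = m + (p + d) + (y - m - d).
  by rewrite [RHS]addrC !addrA [_ + m]addrAC subrK addrAC subrK addrC.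
rewrite /observer_error !mulmxDr !mulmxN !mulmxA -!(mulmxA (B_r n)).
rewrite !C_obs_bezout_mx ?size_num_poly ?size_den_polyB //.
rewrite /A_a /A_r (A_comp_poly_rV a c) L_b_num_poly scale_output mulmxDl -!mulmxA.
exact: cancel.
Qed.

End ObserverError.

Section SegmentIntegral.
Variable R : realType.
Local Notation mu := (@lebesgue_measure R).
Local Notation integrable_on t f := (mu.-integrable `[0, t] (EFin \o f)).
Implicit Types (t : R) (f g : R -> R).

Lemma eq_integrable_on t f g :
  (forall x, 0 <= x <= t -> f x = g x) -> integrable_on t f -> integrable_on t g.
Proof.
move=> fg; apply: eq_integrable => // x; rewrite inE /= in_itv /= => xt.
by rewrite /comp fg.
Qed.

Lemma eq_Rintegral_on t f g : (forall x, 0 <= x <= t -> f x = g x) ->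
  \int[mu]_(x in `[0, t]) f x = \int[mu]_(x in `[0, t]) g x.
Proof.
by move=> fg; apply: eq_Rintegral => x; rewrite inE /= in_itv /= => /fg.
Qed.

Lemma integrable_onB t f g :
  integrable_on t f -> integrable_on t g -> integrable_on t (fun s => f s - g s).
Proof. by move=> If Ig; apply: eq_integrable (integrableB _ If Ig) => // x _. Qed.

Lemma integrable_onZ t k f : integrable_on t f -> integrable_on t (fun s => k * f s).
Proof. by move=> If; apply: eq_integrable (integrableZl _ k If) => // x _. Qed.

Lemma integrable_on_norm t f : integrable_on t f -> integrable_on t (fun s => `|f s|).
Proof. exact: integrable_norm. Qed.

Lemma integrable_on_sum t I (r : seq I) (P : pred I) (F : I -> R -> R) :
  (forall i, P i -> integrable_on t (F i)) ->
  integrable_on t (fun s => \sum_(i <- r | P i) F i s).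
Proof.
move=> IF; apply: eq_integrable (integrable_sum _ r IF) => //.
by move=> x _; rewrite /comp sumEFin.
Qed.

Lemma Rintegral_on_sum t I (r : seq I) (P : pred I) (F : I -> R -> R) :
  (forall i, P i -> integrable_on t (F i)) ->
  \int[mu]_(s in `[0, t]) (\sum_(i <- r | P i) F i s) =
  \sum_(i <- r | P i) \int[mu]_(s in `[0, t]) F i s.
Proof.
move=> IF; elim: r => [|i r IHr].
  rewrite big_nil (eq_Rintegral_on (g := fun _ => 0)) => [|x _]; last by rewrite big_nil.
  by rewrite Rintegral_cst // mul0r.
rewrite big_cons; case: ifP => Pi; last first.
  by rewrite -IHr; apply: eq_Rintegral_on => x _; rewrite big_cons Pi.
rewrite -IHr -RintegralD ?IF ?integrable_on_sum //.
by apply: eq_Rintegral_on => x _; rewrite big_cons Pi.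
Qed.

End SegmentIntegral.

Section IntegralSolutions.
Variable R : realType.
Local Notation mu := (@lebesgue_measure R).
Local Notation integrable_on t f := (mu.-integrable `[0, t] (EFin \o f)).

Lemma ode_sol_eq_rhs k (z : R -> 'cV[R]_k) F G :
  (forall s, 0 <= s -> F s = G s) -> ode_sol z F -> ode_sol z G.
Proof.
move=> FG zF t t0 i; have [IF zE] := zF t t0 i; split.
  by apply: eq_integrable_on IF => x /andP[x0 _]; rewrite FG.
by rewrite zE; congr (_ + _); apply: eq_Rintegral_on => x /andP[x0 _]; rewrite FG.
Qed.

Lemma ode_solB k (z1 z2 : R -> 'cV[R]_k) F1 F2 :
  ode_sol z1 F1 -> ode_sol z2 F2 ->
  ode_sol (fun s => z1 s - z2 s) (fun s => F1 s - F2 s).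
Proof.
move=> zF1 zF2 t t0 i; have [I1 z1E] := zF1 t t0 i; have [I2 z2E] := zF2 t t0 i.
split; first by apply: eq_integrable_on (integrable_onB I1 I2) => x _; rewrite !mxE.
rewrite (eq_Rintegral_on (g := fun x => F1 x i 0 - F2 x i 0)) => [|x _];
  last by rewrite !mxE.
by rewrite RintegralB // !mxE z1E z2E; ring.
Qed.

Lemma ode_sol_mulmx k m (P : 'M[R]_(m, k)) (z : R -> 'cV[R]_k) F :
  ode_sol z F -> ode_sol (fun s => P *m z s) (fun s => P *m F s).
Proof.
move=> zF t t0 i.
have IF j : integrable_on t (fun s => P i j * F s j 0).
  by apply: integrable_onZ; have [] := zF t t0 j.
split.
  by apply: eq_integrable_on (integrable_on_sum _ (fun j _ => IF j)) => x _; rewrite !mxE.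
rewrite (eq_Rintegral_on (g := fun x => \sum_j P i j * F x j 0)) => [|x _];
  last by rewrite !mxE.
rewrite Rintegral_on_sum // !mxE -big_split; apply: eq_bigr => j _ /=.
by have [Ij ->] := zF t t0 j; rewrite RintegralZl //; ring.
Qed.

Lemma ode_sol_col_mx k1 k2 (z1 : R -> 'cV[R]_k1) (z2 : R -> 'cV[R]_k2) F1 F2 :
  ode_sol z1 F1 -> ode_sol z2 F2 ->
  ode_sol (fun s => col_mx (z1 s) (z2 s)) (fun s => col_mx (F1 s) (F2 s)).
Proof.
move=> zF1 zF2 t t0 i; case: (splitP i) => j iE.
  have -> : i = lshift k2 j by apply: val_inj.
  have [Ij zE] := zF1 t t0 j; split.
    by apply: eq_integrable_on Ij => x _; rewrite col_mxEu.
  rewrite !col_mxEu zE; congr (_ + _).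
  by apply: eq_Rintegral_on => x _; rewrite col_mxEu.
have -> : i = rshift k1 j by apply: val_inj.
have [Ij zE] := zF2 t t0 j; split.
  by apply: eq_integrable_on Ij => x _; rewrite col_mxEd.
rewrite !col_mxEd zE; congr (_ + _).
by apply: eq_Rintegral_on => x _; rewrite col_mxEd.
Qed.

End IntegralSolutions.

Section MonomialIntegral.
Variable R : realType.
Local Notation mu := (@lebesgue_measure R).
Local Notation integrable_on t f := (mu.-integrable `[0, t] (EFin \o f)).

Lemma Rintegral_exprn (j : nat) (s : R) : 0 <= s ->
  \int[mu]_(x in `[0, s]) x ^+ j = s ^+ j.+1 / j.+1%:R.
Proof.
rewrite le_eqVlt => /predU1P[<-|s0].
  by rewrite set_itv1 Rintegral_set1 expr0n /= mul0r.
rewrite /Rintegral.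
rewrite (@continuous_FTC2 R (fun x => x ^+ j) (fun x => x ^+ j.+1 / j.+1%:R) 0 s) //.
- by rewrite expr0n /= mul0r subr0.
- by apply: continuous_subspaceT => x; exact: exprn_continuous.
- split.
  + by move=> x _; apply: derivableM => //; exact: exprn_derivable.
  + by apply: cvg_at_right_filter; apply: cvgM; [exact: exprn_continuous|exact: cvg_cst].
  + by apply: cvg_at_left_filter; apply: cvgM; [exact: exprn_continuous|exact: cvg_cst].
- move=> x _; rewrite derive1E deriveMr; last exact: exprn_derivable.
  rewrite exp_derive /= [X in _ * X]/(_ *: 1) /GRing.scale /= mulr1 mulrA.
  by rewrite mulVf ?mul1r.
Qed.

Lemma integrable_on_monomial t (j : nat) (w : R) : integrable_on t (fun s => s ^+ j * w).
Proof.
apply: (@eq_integrable_on _ t (fun s => (w *: 'X^j : {poly R}).[s])).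
  by move=> x _; rewrite hornerZ hornerXn mulrC.
apply: continuous_compact_integrable; first exact: segment_compact.
by apply: continuous_subspaceT; exact: (@continuous_horner R _).
Qed.

Lemma Rintegral_monomial t (j : nat) (w : R) : 0 <= t ->
  \int[mu]_(s in `[0, t]) (s ^+ j * w) = t ^+ j.+1 / j.+1%:R * w.
Proof.
move=> t0; rewrite (eq_Rintegral_on (g := fun s => w * s ^+ j)) => [|x _]; last first.
  by rewrite mulrC.
rewrite RintegralZl ?Rintegral_exprn 1?mulrC //.
by apply: eq_integrable_on (integrable_on_monomial t j 1) => x _; rewrite mulr1.
Qed.

Lemma Rintegral_on_le (s t : R) f : 0 <= s <= t -> integrable_on t f ->
  (forall x, 0 <= f x) ->
  \int[mu]_(x in `[0, s]) f x <= \int[mu]_(x in `[0, t]) f x.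
Proof.
move=> /andP[s0 st] It f0.
have sub : `[0, s] `<=` `[0, t].
  by move=> x /=; rewrite !in_itv /= => /andP[-> xs] /=; exact: le_trans xs st.
have Is : integrable_on s f by apply: integrableS It.
rewrite /Rintegral fine_le ?(integrable_fin_num _ Is) ?(integrable_fin_num _ It) //.
apply: ge0_subset_integral => //; first exact: measurable_int It.
by move=> x _; rewrite lee_fin.
Qed.

End MonomialIntegral.

Section LinearODE.
Variables (R : realType) (k : nat) (M : 'M[R]_k).
Local Notation mu := (@lebesgue_measure R).
Local Notation integrable_on t f := (mu.-integrable `[0, t] (EFin \o f)).

Definition exp_partial (z0 : 'cV[R]_k) (m : nat) (t : R) : 'cV[R]_k :=
  \sum_(j < m) (t ^+ j / j`!%:R) *: (M ^+ j *m z0).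

Lemma exp_partial_coef z0 m t i :
  exp_partial z0 m t i 0 = \sum_(j < m) t ^+ j * ((M ^+ j *m z0) i 0 / j`!%:R).
Proof. by rewrite summxE; apply: eq_bigr => j _; rewrite mxE; ring. Qed.

Lemma mulmx_exp_partial_coef z0 m t i :
  (M *m exp_partial z0 m t) i 0 =
  \sum_(j < m) t ^+ j * ((M ^+ j.+1 *m z0) i 0 / j`!%:R).
Proof.
rewrite mulmx_sumr summxE; apply: eq_bigr => j _.
have MME : M *m M ^+ j = M ^+ j.+1 by rewrite exprS mulmxE.
by rewrite -scalemxAr mulmxA MME mxE; ring.
Qed.

Lemma integrable_mulmx_exp_partial z0 m t i :
  integrable_on t (fun s => (M *m exp_partial z0 m s) i 0).
Proof.
apply: eq_integrable_on (integrable_on_sum _ (fun j _ => integrable_on_monomial _ _ _)).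
by move=> s _; rewrite mulmx_exp_partial_coef.
Qed.

Lemma Rintegral_mulmx_exp_partial z0 m t i : 0 <= t ->
  \int[mu]_(s in `[0, t]) (M *m exp_partial z0 m s) i 0 =
  exp_partial z0 m.+1 t i 0 - z0 i 0.
Proof.
move=> t0; rewrite (eq_Rintegral_on (fun s _ => mulmx_exp_partial_coef z0 m s i)).
rewrite Rintegral_on_sum => [|j _]; last exact: integrable_on_monomial.
rewrite exp_partial_coef big_ord_recl /= expr0 mul1r fact0 divr1 mul1mx addrC addKr.
apply: eq_bigr => j _; rewrite Rintegral_monomial //= /bump /= add1n.
by rewrite factS natrM invfM; ring.
Qed.

Definition mx_abs_sum : R := \sum_i \sum_j `|M i j|.

Lemma mx_abs_sum_ge0 : 0 <= mx_abs_sum.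
Proof. by apply: sumr_ge0 => i _; apply: sumr_ge0. Qed.

Lemma row_abs_sum_le (i : 'I_k) : \sum_j `|M i j| <= mx_abs_sum.
Proof.
rewrite /mx_abs_sum [X in _ <= X](bigD1 i) //= lerDl.
by apply: sumr_ge0 => l _; exact: sumr_ge0.
Qed.

Lemma col_abs_sum_le (j : 'I_k) : \sum_i `|M i j| <= mx_abs_sum.
Proof. by apply: ler_sum => i _; rewrite [X in _ <= X](bigD1 j) //= lerDl sumr_ge0. Qed.

Lemma normr_mulmx_le (v : 'cV[R]_k) (K : R) i :
  (forall j, `|v j 0| <= K) -> `|(M *m v) i 0| <= mx_abs_sum * K.
Proof.
move=> vK; have K0 : 0 <= K := le_trans (normr_ge0 _) (vK i).
rewrite mxE (le_trans (ler_norm_sum _ _ _)) //.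
apply: (@le_trans _ _ (\sum_j `|M i j| * K)).
  by apply: ler_sum => j _; rewrite normrM ler_wpM2l.
by rewrite -mulr_suml ler_wpM2r // row_abs_sum_le.
Qed.

Lemma normr_mxpow_le l (i j : 'I_k) : `|(M ^+ l) i j| <= mx_abs_sum ^+ l.
Proof.
elim: l i j => [|l IHl] i j.
  by rewrite expr0 mxE; case: (i == j); rewrite ?normr1 ?normr0.
rewrite exprSr -mulmxE mxE (le_trans (ler_norm_sum _ _ _)) //.
apply: (@le_trans _ _ (\sum_q mx_abs_sum ^+ l * `|M q j|)).
  by apply: ler_sum => q _; rewrite normrM ler_wpM2r.
by rewrite -mulr_sumr exprSr ler_wpM2l ?exprn_ge0 ?mx_abs_sum_ge0 ?col_abs_sum_le.
Qed.

End LinearODE.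

Section PicardIteration.
Variables (R : realType) (k : nat) (M : 'M[R]_k).
Local Notation mu := (@lebesgue_measure R).
Variables (z : R -> 'cV[R]_k) (T : R).
Hypotheses (zM : ode_sol z (fun s => M *m z s)) (T0 : 0 <= T).
Local Notation S := (exp_partial M (z 0)).
Local Notation C := (mx_abs_sum M).

Let K : R := \sum_i (`|z 0 i 0| + \int[mu]_(s in `[0, T]) `|(M *m z s) i 0|).

Lemma ode_sol_normr_le s i : 0 <= s <= T -> `|z s i 0| <= K.
Proof.
move=> /andP[s0 sT]; have [Is ->] := zM s0 i; have [IT _] := zM T0 i.
rewrite (le_trans (ler_normD _ _)) // /K (bigD1 i) //= -addrA lerD2l.
rewrite (le_trans (le_normr_Rintegral _ Is)) //.
rewrite (le_trans (Rintegral_on_le _ (integrable_on_norm IT) _)) ?s0 //.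
by rewrite lerDl sumr_ge0 // => l _; rewrite addr_ge0 ?Rintegral_ge0.
Qed.

Lemma exp_partial_approx m s i : 0 <= s <= T ->
  `|z s i 0 - S m s i 0| <= K * ((C * s) ^+ m / m`!%:R).
Proof.
elim: m s i => [|m IHm] s i /andP[s0 sT].
  rewrite /exp_partial big_ord0 mxE subr0 expr0 fact0 divr1 mulr1.
  by apply: ode_sol_normr_le; rewrite s0.
have [Iz zE] := zM s0 i.
have Id := integrable_onB Iz (integrable_mulmx_exp_partial M (z 0) m s i).
have -> : z s i 0 - S m.+1 s i 0 =
    \int[mu]_(r in `[0, s]) ((M *m z r) i 0 - (M *m S m r) i 0).
  rewrite RintegralB ?integrable_mulmx_exp_partial //.
  by rewrite zE Rintegral_mulmx_exp_partial //; ring.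
rewrite (le_trans (le_normr_Rintegral _ Id)) //.
pose w := C * (K * C ^+ m / m`!%:R).
apply: (@le_trans _ _ (\int[mu]_(r in `[0, s]) (r ^+ m * w))).
  apply: le_Rintegral => //; first exact: integrable_on_norm.
    exact: integrable_on_monomial.
  move=> r; rewrite /= in_itv /= => /andP[r0 rs].
  have -> : (M *m z r) i 0 - (M *m S m r) i 0 = (M *m (z r - S m r)) i 0.
    by rewrite mulmxBr !mxE.
  rewrite (_ : _ * w = C * (K * ((C * r) ^+ m / m`!%:R))); last first.
    by rewrite /w exprMn; ring.
  by apply: normr_mulmx_le => j; rewrite !mxE IHm // r0 (le_trans rs sT).
rewrite Rintegral_monomial // (_ : _ * w = K * ((C * s) ^+ m.+1 / m.+1`!%:R)) //.
by rewrite /w factS natrM invfM exprMn !exprS; ring.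
Qed.

End PicardIteration.

Section LinearODEUniqueness.
Variables (R : realType) (k : nat) (M : 'M[R]_k).
Local Notation S := (exp_partial M).
Local Notation C := (mx_abs_sum M).

Lemma mexp_partial_cvg (t : R) (i j : 'I_k) :
  cvgn (fun m => \sum_(l < m) (t ^+ l / l`!%:R) * (M ^+ l) i j).
Proof.
pose u l := (t ^+ l / l`!%:R) * (M ^+ l) i j.
rewrite (_ : (fun m => _) = series u); last first.
  by apply/funext => m; rewrite /series /= big_mkord.
apply: (@normed_cvg _ R^o); apply: (series_le_cvg (v_ := exp_coeff (C * `|t|))).
- by move=> l /=.
- by move=> l; rewrite /exp_coeff /= divr_ge0 ?exprn_ge0 ?mulr_ge0 ?mx_abs_sum_ge0.
- move=> l; rewrite /u /exp_coeff /= normrM normf_div normr_nat normrX exprMn.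
  rewrite mulrC [_ * `|t| ^+ l]mulrC mulrA ler_wpM2r ?invr_ge0 //.
  by rewrite mulrC ler_wpM2l ?exprn_ge0 ?normr_mxpow_le.
- exact: is_cvg_series_exp_coeff.
Qed.

Lemma exp_partial_cvg_mexp z0 t i :
  S z0 m t i 0 @[m --> \oo] --> (mexp M t *m z0) i 0.
Proof.
rewrite mxE; under eq_bigr do rewrite mxE.
rewrite (_ : (fun m => _) =
    fun m => \sum_l (\sum_(q < m) (t ^+ q / q`!%:R) * (M ^+ q) i l) * z0 l 0).
  apply: (@cvg_big _ _ +%R 0 predT add_continuous) => // l _.
  by apply: cvgM; [exact: mexp_partial_cvg | exact: cvg_cst].
apply/funext => m; rewrite /exp_partial summxE.
under [RHS]eq_bigr do rewrite mulr_suml.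
rewrite exchange_big /=; apply: eq_bigr => q _.
by rewrite !mxE mulr_sumr; apply: eq_bigr => l _; ring.
Qed.

Lemma exp_partial_cvg_sol (z : R -> 'cV[R]_k) t :
  ode_sol z (fun s => M *m z s) -> 0 <= t ->
  forall i, S (z 0) m t i 0 @[m --> \oo] --> z t i 0.
Proof.
move=> zM t0 i.
have [K approx] : exists K, forall m,
    `|z t i 0 - S (z 0) m t i 0| <= K * exp_coeff (C * t) m.
  by eexists => m; apply: (exp_partial_approx zM t0); rewrite t0 lexx.
have err0 : (fun m => z t i 0 - S (z 0) m t i 0) @ \oo --> 0.
  have bound0 : (fun m => K * exp_coeff (C * t) m) @ \oo --> 0.
    rewrite -(mulr0 K); apply: cvgM; first exact: cvg_cst.
    exact: cvg_series_cvg_0 (is_cvg_series_exp_coeff _).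
  have between : \forall m \near \oo, - (K * exp_coeff (C * t) m) <=
      z t i 0 - S (z 0) m t i 0 <= K * exp_coeff (C * t) m.
    by near=> m; rewrite -ler_norml.
  have bound0N : (fun m => - (K * exp_coeff (C * t) m)) @ \oo --> 0.
    by rewrite -oppr0; apply: cvgN.
  exact: squeeze_cvgr between _ bound0N bound0.
rewrite -[X in _ --> X]subr0; apply: cvg_trans (cvgB (cvg_cst _) err0).
by apply: near_eq_cvg; near=> m; rewrite opprB addrC subrK.
Unshelve. all: by end_near.
Qed.

Lemma ode_sol_linear_mexp (z : R -> 'cV[R]_k) t :
  ode_sol z (fun s => M *m z s) -> 0 <= t -> z t = mexp M t *m z 0.
Proof.
move=> zM t0; apply/matrixP => i j; rewrite (ord1 j).
have := cvg_lim (@Rhausdorff R) (exp_partial_cvg_sol zM t0 (i := i)).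
have mexpE := exp_partial_cvg_mexp (z0 := z 0) (t := t) (i := i).
by rewrite (cvg_lim (@Rhausdorff R) mexpE) => ->.
Qed.

End LinearODEUniqueness.

Theorem theorem1 (R : realType) (n : nat) (a b : 'I_n -> R) :
  (0 < n)%N ->
  coprimep (den_poly a) (num_poly b) ->
  forall (c : 'I_n -> R) (x0 : 'cV[R]_n) (u : R -> R)
         (x zeta mu : R -> 'cV[R]_n),
  loc_integrable u ->
  x 0 = x0 ->
  ode_sol x (fun s => A_obs a *m x s + u s *: B_obs b) ->
  zeta 0 = 0 ->
  ode_sol zeta (fun s => A_r c *m zeta s + u s *: B_r n) ->
  mu 0 = 0 ->
  ode_sol mu (fun s => A_r c *m mu s + (C_obs n *m x s) 0 0 *: B_r n) ->
  ode_sol (fun s => col_mx (zeta s) (mu s))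
    (fun s => A_f a b c *m col_mx (zeta s) (mu s) + u s *: B_f n
              + G_f n *m (mexp (A_r c)^T s *m x0))
  /\ reachable (A_f a b c) (B_f n).
Proof.
case: n a b => [//|n'] a b _ cop c x0 u x zeta mu _ x0E xF zeta0 zetaF mu0 muF.
split; last exact: reachable_A_f.
pose e s := observer_error a b c (x s) (zeta s) (mu s).
have eF : ode_sol e (fun s => (A_r c)^T *m e s).
  apply: ode_sol_eq_rhs (ode_solB (ode_solB xF (ode_sol_mulmx _ zetaF))
                                  (ode_sol_mulmx _ muF)).
  by move=> s _; exact: observer_error_rhs.
have eE s : 0 <= s -> e s = mexp (A_r c)^T s *m x0.
  move=> s0; rewrite (ode_sol_linear_mexp eF s0) /e /observer_error.
  by rewrite x0E zeta0 mu0 !mulmx0 !subr0.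
apply: ode_sol_eq_rhs (ode_sol_col_mx zetaF muF) => s s0.
rewrite -eE // G_f_block /A_f /B_f mul_block_col mul_col_mx scale_col_mx !add_col_mx.
by rewrite !mul0mx scaler0 !addr0 (mu_rhs a b c _ (zeta s)).
Qed.
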